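(* Let $B$ be a real $n\times n$ matrix, $n\ge2$. Then $B$ has all eigenvalues with real part $\le 0$, with exactly one complex conjugate pair $\pm i\omega$, $\omega\neq 0$, on the imaginary axis (all other eigenvalues having negative real part), if and only if $L_B|_{S_1}$ is injective, $\dim\ker(L_B|_{S_2})=1$, and the characteristic polynomial of $B$ factors as $(\tau^{n-2}+a_1\tau^{n-3}+\dots+a_{n-2})(\tau^2+b)$ with $b>0$ and first factor having all roots with negative real part. In this case the kernel of $L_B|_{S_2}$ is spanned by a positive semidefinite quadratic form $\psi$ of rank two.
   Context: $S_k$ denotes the real vector space of homogeneous polynomials of degree $k$ in $x\in\mathbb R^n$. For a linear map $x\mapsto Bx$, $L_B$ is the Lie derivative $L_B(\psi)(x)=D\psi(x)\,Bx$, which maps each $S_k$ to itself; $L_B|_{S_k}$ denotes its restriction. *)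

From HB Require Import structures.
From mathcomp Require Import all_boot all_order all_algebra.
Set Implicit Arguments. Unset Strict Implicit. Unset Printing Implicit Defensive.
Import Order.TTheory GRing.Theory Num.Theory.
Local Open Scope ring_scope.

(* C is an arbitrary numeric closed field (e.g. the complex
   numbers); "real" means [\is Num.real]; real matrices are
   [\is a realmx] (library notation for mxOver Num.real).  Vectors x of R^n are real column
   vectors 'cV[C]_n.

   S_1 (linear forms): psi(x) = c *m x with c a real row vector 'rV_n.
     Then L_B psi (x) = D psi(x) (B x) = c *m B *m x, so L_B|S_1 : c |-> c *m B.
   S_2 (quadratic forms): psi(x) = x^T P x with P real symmetric.
     D psi(x) v = v^T P x + x^T P v, so L_B psi (x) = x^T (B^T P + P B) x,
     i.e.  L_B|S_2 : P |-> B^T P + P B  (on symmetric P). *)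

Definition qform (C : numFieldType) n (P : 'M[C]_n) (x : 'cV[C]_n) : C :=
  (x^T *m P *m x) 0 0.

Definition S2 (C : numFieldType) n (P : 'M[C]_n) : Prop :=
  P \is a realmx /\ P^T = P.

Definition LB1 (C : numFieldType) n (B : 'M[C]_n) (c : 'rV[C]_n) : 'rV[C]_n :=
  c *m B.
Definition LB2 (C : numFieldType) n (B : 'M[C]_n) (P : 'M[C]_n) : 'M[C]_n :=
  B^T *m P + P *m B.

(* sanity check: LB2 is the Lie derivative, i.e. the t-linear coefficient of
   psi(x + t B x) *)
Lemma LB2_derivative (C : numFieldType) n (B P : 'M[C]_n) (x : 'cV[C]_n) (t : C) :
  qform P (x + t *: (B *m x)) =
  qform P x + t * qform (LB2 B P) x + t ^+ 2 * qform P (B *m x).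
Proof.
rewrite /qform /LB2 linearD /= linearZ /= !trmx_mul.
rewrite raddfD /= linearZ /= trmx_mul.
rewrite !mulmxDl -!scalemxAl !mulmxDr !mulmxDl !mulmxA.
rewrite scalerDr scalerA -expr2 !mxE !addrA mulrDr !addrA.
by [].
Qed.

Definition LB1_injective (C : numFieldType) n (B : 'M[C]_n) : Prop :=
  forall c : 'rV[C]_n, c \is a realmx -> LB1 B c = 0 -> c = 0.

Definition spans_ker_LB2 (C : numFieldType) n (B P : 'M[C]_n) : Prop :=
  [/\ S2 P, P != 0, LB2 B P = 0 &
      forall Q, S2 Q -> LB2 B Q = 0 -> exists2 r : C, r \is Num.real & Q = r *: P].

Definition dim_ker_LB2_eq1 (C : numFieldType) n (B : 'M[C]_n) : Prop :=
  exists P, spans_ker_LB2 B P.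

Definition psd (C : numFieldType) n (P : 'M[C]_n) : Prop :=
  forall x : 'cV[C]_n, x \is a realmx -> 0 <= qform P x.

(* Write a = w i.  The eigenvalues of B other than +-a are the roots of
   p := char_poly B / (X^2 + w^2); p is real because B is, and p is Hurwitz
   exactly when the other eigenvalues lie in the open left half-plane and +-a
   are simple.  Then 0 is not an eigenvalue, so L_B is injective on S_1.
   For S_2, take a left eigenvector r of B for a: the real form
   P = r^T conj(r) + conj(r)^T r, i.e. x |-> 2 |r x|^2, satisfies
   B^T P + P B = 0 and has rank 2.  If Q is another symmetric solution and u a
   right eigenvector for a, then (Q u)^T is a left eigenvector for -a, hence a
   multiple of conj(r), so some E = Q - s P kills u and conj(u).  These span the
   range of p(B), so E p(B) = 0; but E p(B) = p(-B^T) E and p(-B^T) is invertible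
   because p is Hurwitz, hence E = 0.  Simplicity of +-a as roots is what makes
   all eigenspaces used here one-dimensional. *)

From HB Require Import structures.
From mathcomp Require Import all_boot all_order all_algebra.
Import Order.TTheory GRing.Theory Num.Theory Num.Def.
Set Implicit Arguments. Unset Strict Implicit. Unset Printing Implicit Defensive.
Local Open Scope ring_scope.

Section Eigenvectors.
Variable F : fieldType.

Lemma char_poly_trmx n (A : 'M[F]_n) : char_poly A^T = char_poly A.
Proof.
rewrite /char_poly -det_tr; congr (\det _); apply/matrixP => i j.
by rewrite !mxE eq_sym.
Qed.

Lemma eigenvalue_trmx n (A : 'M[F]_n) a : eigenvalue A^T a = eigenvalue A a.
Proof. by rewrite !eigenvalue_root_char char_poly_trmx. Qed.

Lemma char_poly_uconj n (S A : 'M[F]_n) : S \in unitmx ->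
  char_poly (S *m A *m invmx S) = char_poly A.
Proof.
move=> Su; rewrite /char_poly /char_poly_mx.
set S' := map_mx polyC S; set T' := map_mx polyC (invmx S).
have ST : S' *m T' = 1%:M by rewrite -map_mxM mulmxV // map_mx1.
have -> : 'X%:M - map_mx polyC (S *m A *m invmx S) =
          S' *m ('X%:M - map_mx polyC A) *m T'.
  rewrite !map_mxM -/S' -/T' mulmxBr mulmxBl; congr (_ - _).
  by rewrite -scalemx1 -scalemxAr mulmx1 -scalemxAl ST scalemx1.
by rewrite !det_mulmx mulrAC -det_mulmx ST det1 mul1r.
Qed.

Lemma char_poly_lblock m l (X : 'M[F]_m) (Y : 'M[F]_(l, m)) (Z : 'M[F]_l) :
  char_poly (block_mx X 0 Y Z) = char_poly X * char_poly Z.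
Proof.
rewrite /char_poly /char_poly_mx map_block_mx /= map_mx0.
rewrite (scalar_mx_block m l 'X) opp_block_mx add_block_mx oppr0 addr0.
by rewrite det_lblock.
Qed.

Lemma char_poly_scalar m (a : F) : char_poly (a%:M : 'M_m) = ('X - a%:P) ^+ m.
Proof.
rewrite char_poly_trig ?scalar_mx_is_trig //.
under eq_bigr do rewrite mxE eqxx.
by rewrite prodr_const card_ord.
Qed.

Lemma dvdp_char_poly_eigenrows m n (A : 'M[F]_n) (V : 'M[F]_(m, n)) a :
  row_free V -> V *m A = a *: V -> ('X - a%:P) ^+ m %| char_poly A.
Proof.
move=> Vfree VA.
(* Completing [V] to a basis; the number [l] of completing rows is generalized
   so that [n] can be replaced by [m + l]. *)
suff block l (W : 'M_(l, n)) : (m + l = n)%N -> row_full (col_mx V W) ->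
    ('X - a%:P) ^+ m %| char_poly A.
  apply: (block _ (row_base V^C)%MS).
    by rewrite mxrank_compl (eqP Vfree) subnKC // -(eqP Vfree) rank_leq_col.
  rewrite /row_full -addsmxE (adds_eqmx (eqmx_refl V) (eq_row_base _)).
  exact: addsmx_compl_full.
move=> e; case: n / e in A V W Vfree VA *; rewrite row_full_unit => Su.
rewrite -(char_poly_uconj A Su).
set A' := _ *m _ *m _.
have A'u : usubmx A' = row_mx a%:M 0.
  rewrite /A' -!mul_usub_mx col_mxKu VA -scalemxAl -[V in V *m _](col_mxKu V W).
  rewrite mul_usub_mx mulmxV // (scalar_mx_block m l 1) /block_mx col_mxKu.
  by rewrite scale_row_mx scaler0 scalemx1.
rewrite -[A']submxK /ulsubmx /ursubmx A'u row_mxKl row_mxKr char_poly_lblock.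
by rewrite char_poly_scalar dvdp_mulr.
Qed.

Lemma mx_eq0_on_cV m n (M : 'M[F]_(m, n)) : (forall x : 'cV_n, M *m x = 0) -> M = 0.
Proof.
move=> M0; apply/matrixP => i j.
by have /colP/(_ i) := M0 (delta_mx j 0); rewrite -colE !mxE.
Qed.

Lemma rV_dependent n (x y : 'rV[F]_n) :
  x != 0 -> ~~ row_free (col_mx x y) -> exists k, y = k *: x.
Proof.
move=> x0 xy_dep; apply/sub_rVP; apply: contraNT xy_dep => y_notin_x.
have : (x < x + y)%MS by rewrite ltmxE addsmxSl addsmx_sub submx_refl.
rewrite ltmxErank addsmxSl rank_rV x0 /= addsmxE => rank_gt1.
by rewrite /row_free eqn_leq rank_gt1 rank_leq_row.
Qed.

Lemma eigenrow_simple n (A : 'M[F]_n) a (x y : 'rV[F]_n) :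
  (mup a (char_poly A) <= 1)%N -> x != 0 ->
  x *m A = a *: x -> y *m A = a *: y -> exists k, y = k *: x.
Proof.
move=> mup_le1 x0 xA yA; apply: rV_dependent x0 _; apply: contraTN mup_le1 => xy_free.
rewrite -ltnNge mup_geq ?monic_neq0 ?char_poly_monic //.
by apply: dvdp_char_poly_eigenrows xy_free _; rewrite mul_col_mx xA yA scale_col_mx.
Qed.

Lemma eigencol_simple n (A : 'M[F]_n) a (x y : 'cV[F]_n) :
  (mup a (char_poly A) <= 1)%N -> x != 0 ->
  A *m x = a *: x -> A *m y = a *: y -> exists k, y = k *: x.
Proof.
rewrite -char_poly_trmx -trmx_eq0 => mup_le1 x0 Ax Ay.
have xA : x^T *m A^T = a *: x^T by rewrite -trmx_mul Ax linearZ.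
have yA : y^T *m A^T = a *: y^T by rewrite -trmx_mul Ay linearZ.
have [k yk] := eigenrow_simple mup_le1 x0 xA yA.
by exists k; apply: trmx_inj; rewrite yk linearZ.
Qed.

Lemma eigenrow_eigencol_orthogonal n (A : 'M[F]_n) a b (x : 'rV_n) (y : 'cV_n) :
  a != b -> x *m A = a *: x -> A *m y = b *: y -> x *m y = 0.
Proof.
move=> ab xA Ay; have : (a - b) *: (x *m y) = 0.
  by rewrite scalerBl scalemxAl -xA -mulmxA Ay -scalemxAr subrr.
by move/eqP; rewrite scaler_eq0 subr_eq0 (negPf ab) => /eqP.
Qed.

Lemma row_free_eigenrows n (A : 'M[F]_n) a b (x y : 'rV_n) :
  a != b -> x != 0 -> y != 0 -> x *m A = a *: x -> y *m A = b *: y ->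
  row_free (col_mx x y).
Proof.
move=> ab x0 y0 xA yA; apply: contraT => /(rV_dependent x0)[k yk].
have : (a - b) *: y = 0.
  by rewrite scalerBl -yA yk -scalemxAl xA !scalerA mulrC subrr.
by move/eqP; rewrite scaler_eq0 subr_eq0 (negPf ab) (negPf y0).
Qed.
End Eigenvectors.

Section HornerMx.
Variable F : fieldType.

Lemma horner_mx_intertwine m n (E : 'M[F]_(m.+1, n.+1)) A M (p : {poly F}) :
  E *m A = M *m E -> E *m horner_mx A p = horner_mx M p *m E.
Proof.
move=> EA; elim/poly_ind: p => [|p c IH]; first by rewrite !rmorph0 mulmx0 mul0mx.
rewrite !rmorphD !rmorphM /= !horner_mx_X !horner_mx_C mulmxDr mulmxDl.
rewrite -!mulmxE mulmxA IH -!mulmxA EA.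
by rewrite mul_mx_scalar mul_scalar_mx.
Qed.

Lemma horner_mx_scalar n (a : F) p : horner_mx (a%:M : 'M_n.+1) p = p.[a]%:M.
Proof.
elim/poly_ind: p => [|p c IH]; first by rewrite rmorph0 horner0 raddf0.
rewrite rmorphD rmorphM /= horner_mx_X horner_mx_C IH hornerMXaddC.
by rewrite -mulmxE -scalar_mxM raddfD.
Qed.

Lemma horner_mx_eigenrow n (A : 'M[F]_n.+1) a (x : 'rV_n.+1) p :
  x *m A = a *: x -> x *m horner_mx A p = p.[a] *: x.
Proof.
rewrite -mul_scalar_mx => xA.
by rewrite (horner_mx_intertwine p xA) horner_mx_scalar mul_scalar_mx.
Qed.

End HornerMx.

Lemma horner_mx_unit (F : closedFieldType) n (A : 'M[F]_n.+1) (p : {poly F}) :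
  (forall z, eigenvalue A z -> ~~ root p z) -> horner_mx A p \in unitmx.
Proof.
move=> no_root.
have /Bezout_eq1_coprimepP[[u v] /= uv1] : coprimep p (char_poly A).
  apply: contraT; rewrite coprimep_def => /closed_rootP[z].
  rewrite root_gcd => /andP[pz Az].
  by move: (no_root z); rewrite eigenvalue_root_char Az pz => /(_ isT).
have := congr1 (horner_mx A) uv1.
rewrite rmorphD !rmorphM /= Cayley_Hamilton mulr0 addr0 rmorph1.
by move/mulmx1_unit => [].
Qed.

Section LieDerivative.
Variable C : numFieldType.

Lemma LB2B n (B P Q : 'M[C]_n) : LB2 B (P - Q) = LB2 B P - LB2 B Q.
Proof. by rewrite /LB2 mulmxBr mulmxBl addrACA opprD. Qed.

Lemma LB2Z n (B P : 'M[C]_n) s : LB2 B (s *: P) = s *: LB2 B P.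
Proof. by rewrite /LB2 scalerDr scalemxAr scalemxAl. Qed.

Lemma LB1_injective_nonsingular n (B : 'M[C]_n) : ~~ eigenvalue B 0 -> LB1_injective B.
Proof.
move=> B0 c _ cB; apply: contraNeq B0 => c0.
by apply/eigenvalueP; exists c; rewrite // scale0r.
Qed.

Lemma LB2_eq0_eigencol n (B E : 'M[C]_n) l (y : 'cV_n) : E^T = E ->
  LB2 B E = 0 -> B *m y = l *: y -> (E *m y)^T *m B = - l *: (E *m y)^T.
Proof.
move=> Esym /eqP; rewrite /LB2 addrC addr_eq0 => /eqP EB By.
rewrite trmx_mul Esym -mulmxA EB mulmxN mulmxA -trmx_mul By linearZ /=.
by rewrite -scalemxAl scaleNr.
Qed.

Lemma LB2_eq0_horner n (B E : 'M[C]_n.+1) p :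
  LB2 B E = 0 -> E *m horner_mx B p = horner_mx (- B^T) p *m E.
Proof.
move=> /eqP; rewrite /LB2 addrC addr_eq0 => /eqP EB.
by apply: horner_mx_intertwine; rewrite EB mulNmx.
Qed.
End LieDerivative.

Definition hurwitz (C : numClosedFieldType) (p : {poly C}) : Prop :=
  forall z, root p z -> 'Re z < 0.

Definition imaginary_pair_spectrum (C : numClosedFieldType) n (B : 'M[C]_n) (w : C) :=
  [/\ forall a, eigenvalue B a -> 'Re a <= 0,
      forall a, eigenvalue B a -> 'Re a = 0 -> a = w * 'i \/ a = - (w * 'i),
      mup (w * 'i) (char_poly B) = 1%N &
      mup (- (w * 'i)) (char_poly B) = 1%N].

Section ComplexConjugation.
Variable C : numClosedFieldType.

Lemma realmx_of_conj m n (A : 'M[C]_(m, n)) : map_mx conjC A = A -> A \is a realmx.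
Proof.
move=> AC; apply/mxOverP => i j; rewrite CrealE.
by have := congr1 (fun M : 'M[C]_(m, n) => M i j) AC; rewrite mxE => ->.
Qed.

Lemma polyOver_real_of_conj (p : {poly C}) :
  map_poly conjC p = p -> p \is a polyOver Num.real.
Proof. by move=> pC; apply/polyOverP => i; rewrite CrealE -{2}pC coef_map. Qed.

Lemma conj_eigenrow n (B : 'M[C]_n) a (r : 'rV_n) : B \is a realmx ->
  r *m B = a *: r -> map_mx conjC r *m B = a^* *: map_mx conjC r.
Proof. by move=> Breal rB; rewrite -{1}(realmxC Breal) -map_mxM rB map_mxZ. Qed.

Lemma conj_eigencol n (B : 'M[C]_n) a (u : 'cV_n) : B \is a realmx ->
  B *m u = a *: u -> B *m map_mx conjC u = a^* *: map_mx conjC u.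
Proof. by move=> Breal Bu; rewrite -{1}(realmxC Breal) -map_mxM Bu map_mxZ. Qed.

Lemma char_poly_real n (B : 'M[C]_n) :
  B \is a realmx -> map_poly conjC (char_poly B) = char_poly B.
Proof. by move=> Breal; rewrite map_char_poly realmxC. Qed.

Lemma real_scale_realmx m n (A : 'M[C]_(m, n)) s :
  A \is a realmx -> A != 0 -> s *: A \is a realmx -> s \is Num.real.
Proof.
move=> /mxOverP Areal A0 /mxOverP sAreal.
have /existsP[i /existsP[j Aij]] : [exists i, [exists j, A i j != 0]].
  apply: contraR A0 => /existsPn A0; apply/eqP/matrixP => i j.
  by have /existsPn/(_ j)/negPn/eqP -> := A0 i; rewrite mxE.
by have := rpred_div (sAreal i j) (Areal i j); rewrite mxE mulfK.
Qed.

End ComplexConjugation.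

Section ImaginaryPoint.
Variables (C : numClosedFieldType) (w : C).
Hypotheses (w_real : w \is Num.real) (w_neq0 : w != 0).

Lemma conj_mulCi : (w * 'i)^* = - (w * 'i).
Proof. by rewrite rmorphM /= conj_Creal // conjCi mulrN. Qed.

Lemma Re_mulCi : 'Re (w * 'i) = 0.
Proof. by rewrite ReMir; move/Creal_ImP: w_real => ->; rewrite oppr0. Qed.

Lemma Re_oppr_mulCi : 'Re (- (w * 'i)) = 0.
Proof. by rewrite raddfN /= Re_mulCi oppr0. Qed.

Lemma mulCi_neq0 : w * 'i != 0.
Proof. by rewrite mulf_neq0 // neq0Ci. Qed.

Lemma oppr_mulCi_neq : - (w * 'i) != w * 'i.
Proof. by rewrite eqNr mulCi_neq0. Qed.

Lemma XsubC_mulCi_pair :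
  ('X - (w * 'i)%:P) * ('X - (- (w * 'i))%:P) = 'X ^+ 2 + (w ^+ 2)%:P.
Proof.
rewrite polyCN opprK -subr_sqr -rmorphXn /= exprMn sqrCi mulrN1 polyCN.
by rewrite opprK.
Qed.
End ImaginaryPoint.

Section Spectrum.
Variable C : numClosedFieldType.

Lemma hurwitz_root_Re0 (p : {poly C}) z : hurwitz p -> 'Re z = 0 -> ~~ root p z.
Proof. by move=> p_hurwitz Rez; apply/negP => /p_hurwitz; rewrite Rez ltxx. Qed.

Lemma imaginary_pair_char_poly n (B : 'M[C]_n) (w : C) :
  B \is a realmx -> w \is Num.real -> w != 0 -> imaginary_pair_spectrum B w ->
  exists2 p : {poly C}, [/\ p \is monic, size p = n.-1, p \is a polyOver Num.real &
    char_poly B = p * ('X ^+ 2 + (w ^+ 2)%:P)] & hurwitz p.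
Proof.
move=> Breal w_real w0 [Re_le0 Re0_pair mup_a mup_Na].
set h := 'X ^+ 2 + (w ^+ 2)%:P.
have chi0 : char_poly B != 0 by rewrite monic_neq0 ?char_poly_monic.
have h_monic : h \is monic by rewrite monicXnaddC.
have h_real : map_poly conjC h = h.
  by rewrite rmorphD /= map_polyXn map_polyC /= rmorphXn /= conj_Creal.
have h_dvd : h %| char_poly B.
  rewrite /h -XsubC_mulCi_pair Gauss_dvdp; last first.
    by rewrite coprimep_XsubC2 // subr_eq0 oppr_mulCi_neq.
  by rewrite !XsubC_dvd // ?mup_a ?mup_Na.
set p := char_poly B %/ h.
have chiE : char_poly B = p * h by rewrite divpK.
have p0 : p != 0 by apply: contraNneq chi0 => p0; rewrite chiE p0 mul0r.
exists p; first split => //.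
- by rewrite -(monicMr p h_monic) -chiE char_poly_monic.
- move: (size_char_poly B); rewrite chiE size_Mmonic // size_XnaddC //.
  by rewrite addn3 => -[<-].
- apply: polyOver_real_of_conj; apply: (mulIf (monic_neq0 h_monic)).
  by rewrite -{1}h_real -rmorphM /= -chiE char_poly_real.
move=> z pz; have Bz : eigenvalue B z by rewrite eigenvalue_root_char chiE rootM pz.
rewrite lt_neqAle Re_le0 // andbT; apply/eqP => Rez.
have hz : root h z.
  by rewrite /h -XsubC_mulCi_pair rootM !root_XsubC; case: (Re0_pair z Bz Rez) => ->;
    rewrite eqxx ?orbT.
have : (2 <= mup z (char_poly B))%N.
  rewrite chiE mupM ?(monic_neq0 h_monic) //.
  by apply: (@leq_add 1 1); rewrite -XsubC_dvd ?(monic_neq0 h_monic) // dvdp_XsubCl.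
by case: (Re0_pair z Bz Rez) => ->; rewrite ?mup_a ?mup_Na.
Qed.

Lemma imaginary_pair_nonsingular n (B : 'M[C]_n) (w : C) :
  w != 0 -> imaginary_pair_spectrum B w -> ~~ eigenvalue B 0.
Proof.
move=> w0 [_ Re0_pair _ _]; apply/negP => /Re0_pair/(_ (raddf0 _)).
by case=> /esym/eqP; rewrite ?oppr_eq0 (negPf (mulCi_neq0 w0)).
Qed.

Lemma char_poly_imaginary_pair n (B : 'M[C]_n) (w : C) (p : {poly C}) :
  w \is Num.real -> w != 0 -> hurwitz p ->
  char_poly B = p * ('X ^+ 2 + (w ^+ 2)%:P) -> imaginary_pair_spectrum B w.
Proof.
move=> w_real w0 p_hurwitz; rewrite -XsubC_mulCi_pair => chiE.
have eigenB z : eigenvalue B z -> root p z || ((z == w * 'i) || (z == - (w * 'i))).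
  by rewrite eigenvalue_root_char chiE !rootM !root_XsubC.
have [p_a p_Na] : ~~ root p (w * 'i) /\ ~~ root p (- (w * 'i)).
  by split; apply: hurwitz_root_Re0 p_hurwitz _; rewrite ?Re_mulCi ?Re_oppr_mulCi.
split.
- move=> z /eigenB /orP[/p_hurwitz/ltW //|/orP[] /eqP ->].
    by rewrite Re_mulCi.
  by rewrite Re_oppr_mulCi.
- move=> z /eigenB /orP[pz Rez|/orP[] /eqP ->]; [|by left|by right].
  by move: pz; rewrite (negPf (hurwitz_root_Re0 p_hurwitz Rez)).
- rewrite chiE mupMr // mupMl; last by rewrite root_XsubC eq_sym oppr_mulCi_neq.
  by rewrite -['X - _]expr1 mup_XsubCX eqxx.
- rewrite chiE mupMr // mupMr; last by rewrite root_XsubC oppr_mulCi_neq.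
  by rewrite -['X - _]expr1 mup_XsubCX eqxx.
Qed.
End Spectrum.

Section ConjugateSquareForm.
Variable C : numClosedFieldType.

Definition conj_sqform n (r : 'rV[C]_n) : 'M[C]_n :=
  r^T *m map_mx conjC r + (map_mx conjC r)^T *m r.

Variables (n : nat) (r : 'rV[C]_n).
Local Notation rb := (map_mx conjC r).

Lemma conj_sqform_S2 : S2 (conj_sqform r).
Proof.
split; last by rewrite /conj_sqform linearD /= !trmx_mul !trmxK addrC.
have rbK : map_mx conjC rb = r by apply/matrixP => i j; rewrite !mxE conjCK.
apply: realmx_of_conj.
by rewrite /conj_sqform map_mxD !map_mxM -!map_trmx rbK addrC.
Qed.

Lemma conj_sqform_psd : psd (conj_sqform r).
Proof.
move=> x xreal; rewrite /qform.
have rbx : rb *m x = map_mx conjC (r *m x) by rewrite map_mxM (realmxC xreal).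
have -> : x^T *m conj_sqform r *m x = (r *m x)^T *m (rb *m x) + (rb *m x)^T *m (r *m x).
  by rewrite /conj_sqform mulmxDr mulmxDl !mulmxA -!trmx_mul.
rewrite rbx (mx11_scalar (r *m x)); set t := (r *m x) 0 0.
rewrite !mxE !big_ord1 !mxE /= !mulr1n.
by rewrite (mulrC t^*) -normCK addr_ge0 // exprn_ge0.
Qed.

Lemma rank_conj_sqform : row_free (col_mx r rb) -> \rank (conj_sqform r) = 2%N.
Proof.
move=> free_r_rb.
have free_rb_r : row_free (col_mx rb r) by rewrite /row_free -addsmxE addsmxC addsmxE.
have -> : conj_sqform r = (col_mx r rb)^T *m col_mx rb r.
  by rewrite tr_col_mx mul_row_col.
by rewrite mxrankMfree // mxrank_tr; apply/eqP.
Qed.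

Lemma LB2_conj_sqform (B : 'M[C]_n) a : B \is a realmx -> a^* = - a ->
  r *m B = a *: r -> LB2 B (conj_sqform r) = 0.
Proof.
move=> Breal conj_a rB.
have rbB : rb *m B = - a *: rb by rewrite -conj_a (conj_eigenrow Breal rB).
rewrite /LB2 /conj_sqform mulmxDl -!mulmxA rbB rB -!scalemxAr.
rewrite mulmxDr !mulmxA -!trmx_mul rB rbB !linearZ /= -!scalemxAl.
by rewrite !scaleNr addrACA subrr addNr addr0.
Qed.
End ConjugateSquareForm.

Section ImaginaryPairKernel.
Variable C : numClosedFieldType.
Variables (n : nat) (B : 'M[C]_n.+1) (w : C) (p : {poly C}).
Hypotheses (B_real : B \is a realmx) (w_real : w \is Num.real) (w_neq0 : w != 0).
Hypotheses (p_hurwitz : hurwitz p)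
  (char_polyE : char_poly B = p * ('X ^+ 2 + (w ^+ 2)%:P)).
Local Notation a := (w * 'i).

Variables (r : 'rV[C]_n.+1) (u : 'cV[C]_n.+1).
Hypotheses (r_neq0 : r != 0) (rB : r *m B = a *: r).
Hypotheses (u_neq0 : u != 0) (Bu : B *m u = a *: u).
Local Notation rb := (map_mx conjC r).
Local Notation ub := (map_mx conjC u).

Let spectrumB := char_poly_imaginary_pair w_real w_neq0 p_hurwitz char_polyE.

Let mup_a_le1 : (mup a (char_poly B) <= 1)%N.
Proof. by case: spectrumB => _ _ ->. Qed.

Let mup_Na_le1 : (mup (- a) (char_poly B) <= 1)%N.
Proof. by case: spectrumB => _ _ _ ->. Qed.

Let Na_neq_a : - a != a := oppr_mulCi_neq w_neq0.
Let rb_neq0 : rb != 0. Proof. by rewrite map_mx_eq0. Qed.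
Let ub_neq0 : ub != 0. Proof. by rewrite map_mx_eq0. Qed.

Let rbB : rb *m B = - a *: rb.
Proof. by rewrite -(conj_mulCi w_real) (conj_eigenrow B_real rB). Qed.

Let Bub : B *m ub = - a *: ub.
Proof. by rewrite -(conj_mulCi w_real) (conj_eigencol B_real Bu). Qed.

Lemma horner_mx_image_span x :
  exists al be, horner_mx B p *m x = al *: u + be *: ub.
Proof.
have horner_XsubC b : horner_mx B ('X - b%:P) = B - b%:M.
  by rewrite rmorphB /= horner_mx_X horner_mx_C.
set y := horner_mx B p *m x; set z := (B - (- a)%:M) *m y.
have Bz : B *m z = a *: z.
  apply/eqP; rewrite -subr_eq0 -mul_scalar_mx -mulmxBl /z /y !mulmxA.
  rewrite -!horner_XsubC !mulmxE -!rmorphM /= mulrC XsubC_mulCi_pair -char_polyE.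
  by rewrite Cayley_Hamilton mul0mx.
have [l zl] := eigencol_simple mup_a_le1 u_neq0 Bu Bz.
have a_Na : a - - a != 0 by rewrite subr_eq0 eq_sym Na_neq_a.
set y' := y - (l / (a - - a)) *: u.
have By' : B *m y' = - a *: y'.
  apply/eqP; rewrite -subr_eq0 -mul_scalar_mx -mulmxBl /y' mulmxBr -/z zl.
  by rewrite -scalemxAr mulmxBl Bu mul_scalar_mx -scalerBl scalerA divfK // subrr.
have [m y'm] := eigencol_simple mup_Na_le1 ub_neq0 Bub By'.
by exists (l / (a - - a)), m; rewrite -y'm /y' addrC subrK.
Qed.

Lemma eigenrow_eigencol_neq0 : r *m u != 0.
Proof.
apply: contraNneq r_neq0 => ru0.
have r_ub : r *m ub = 0.
  by apply: eigenrow_eigencol_orthogonal rB Bub; rewrite eq_sym Na_neq_a.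
have r_horner : r *m horner_mx B p = 0.
  apply: mx_eq0_on_cV => x; rewrite -mulmxA.
  have [al [be ->]] := horner_mx_image_span x.
  by rewrite mulmxDr -!scalemxAr ru0 r_ub !scaler0 addr0.
have pa0 : p.[a] *: r = 0 by rewrite -(horner_mx_eigenrow p rB).
have /eqP := pa0; rewrite scaler_eq0 (negPf r_neq0) orbF => /eqP pa.
by have := hurwitz_root_Re0 p_hurwitz (Re_mulCi w_real); rewrite /root pa eqxx.
Qed.

Lemma ker_LB2_eq0 E : E^T = E -> LB2 B E = 0 -> E *m u = 0 -> E = 0.
Proof.
move=> Esym LE Eu.
have Eub : E *m ub = 0.
  have := LB2_eq0_eigencol Esym LE Bub; rewrite opprK => Eub_row.
  have [g Eub_g] := eigenrow_simple mup_a_le1 r_neq0 rB Eub_row.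
  have : g *: (r *m u) = 0.
    by rewrite scalemxAl -Eub_g trmx_mul Esym -mulmxA Eu mulmx0.
  move/eqP; rewrite scaler_eq0 (negPf eigenrow_eigencol_neq0) orbF => /eqP g0.
  by rewrite -[E *m ub]trmxK Eub_g g0 scale0r trmx0.
have EpB : E *m horner_mx B p = 0.
  apply: mx_eq0_on_cV => x; rewrite -mulmxA.
  have [al [be ->]] := horner_mx_image_span x.
  by rewrite mulmxDr -!scalemxAr Eu Eub !scaler0 addr0.
have pNBT_unit : horner_mx (- B^T) p \in unitmx.
  apply: horner_mx_unit => z /eigenvalueP[v vNB v0].
  have BNz : eigenvalue B (- z).
    rewrite -eigenvalue_trmx; apply/eigenvalueP; exists v => //.
    by rewrite scaleNr -vNB mulmxN opprK.
  case: spectrumB => Re_le0 _ _ _; have := Re_le0 _ BNz; rewrite raddfN /= oppr_le0.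
  by move=> Rez; apply/negP => /p_hurwitz/lt_le_trans/(_ Rez); rewrite ltxx.
by rewrite -[E](mulKmx pNBT_unit) -LB2_eq0_horner // EpB mulmx0.
Qed.

Lemma spans_ker_LB2_conj_sqform : spans_ker_LB2 B (conj_sqform r).
Proof.
set P := conj_sqform r; set c := (r *m u) 0 0.
have ru : r *m u = c%:M by apply: mx11_scalar.
have c0 : c != 0.
  by apply: contraNneq eigenrow_eigencol_neq0 => c0; rewrite ru c0 raddf0.
have rb_u : rb *m u = 0 := eigenrow_eigencol_orthogonal Na_neq_a rbB Bu.
have Pu : P *m u = c *: rb^T.
  by rewrite /P /conj_sqform mulmxDl -!mulmxA rb_u ru mulmx0 add0r mul_mx_scalar.
have [P_real P_sym] := conj_sqform_S2 r.
have LP := LB2_conj_sqform B_real (conj_mulCi w_real) rB.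
have P0 : P != 0.
  apply/eqP => P_eq0; move: Pu; rewrite P_eq0 mul0mx => /esym/eqP.
  by rewrite scaler_eq0 trmx_eq0 (negPf c0) (negPf rb_neq0).
split=> // Q [Q_real Q_sym] LQ.
have [al Qu] := eigenrow_simple mup_Na_le1 rb_neq0 rbB (LB2_eq0_eigencol Q_sym LQ Bu).
set s := al / c.
have : Q - s *: P = 0.
  apply: ker_LB2_eq0.
  - by rewrite linearB /= linearZ /= Q_sym P_sym.
  - by rewrite LB2B LB2Z LQ LP scaler0 subr0.
  - rewrite mulmxBl -scalemxAl Pu -[Q *m u]trmxK Qu linearZ /=.
    by rewrite scalerA divfK // subrr.
move/eqP; rewrite subr_eq0 => /eqP QP.
by exists s => //; apply: real_scale_realmx P_real P0 _; rewrite -QP.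
Qed.
End ImaginaryPairKernel.

Lemma imaginary_pair_ker_LB2 (C : numClosedFieldType) n (B : 'M[C]_n.+1) w p :
  B \is a realmx -> w \is Num.real -> w != 0 -> hurwitz p ->
  char_poly B = p * ('X ^+ 2 + (w ^+ 2)%:P) ->
  exists P, [/\ spans_ker_LB2 B P, psd P & \rank P = 2%N].
Proof.
move=> B_real w_real w0 p_hurwitz chiE; set a := w * 'i.
have Ba : eigenvalue B a.
  by rewrite eigenvalue_root_char chiE -XsubC_mulCi_pair !rootM root_XsubC eqxx orbT.
have [r rB r0] := eigenvalueP Ba.
have /eigenvalueP[v vBT v0] : eigenvalue B^T a by rewrite eigenvalue_trmx.
have Bu : B *m v^T = a *: v^T by rewrite -[B]trmxK -trmx_mul vBT linearZ.
have u0 : v^T != 0 by rewrite trmx_eq0.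
exists (conj_sqform r); split.
- exact: spans_ker_LB2_conj_sqform B_real w_real w0 p_hurwitz chiE _ _ r0 rB u0 Bu.
- exact: conj_sqform_psd.
apply: rank_conj_sqform; apply: row_free_eigenrows rB (conj_eigenrow B_real rB).
- by rewrite conj_mulCi // eq_sym oppr_mulCi_neq.
- exact: r0.
by rewrite map_mx_eq0.
Qed.

Theorem lemma4p2 (C : numClosedFieldType) (n : nat) (B : 'M[C]_n) :
  (2 <= n)%N -> B \is a realmx ->
  ( (exists2 w : C, (w \is Num.real) && (w != 0) &
       [/\ forall a, eigenvalue B a -> 'Re a <= 0,
           forall a, eigenvalue B a -> 'Re a = 0 -> a = w * 'i \/ a = - (w * 'i),
           mup (w * 'i) (char_poly B) = 1%N &
           mup (- (w * 'i)) (char_poly B) = 1%N])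
    <->
    [/\ LB1_injective B, dim_ker_LB2_eq1 B &
        exists (p : {poly C}) (b : C),
          [/\ p \is monic, size p = n.-1, p \is a polyOver Num.real, 0 < b &
              char_poly B = p * ('X ^+ 2 + b%:P)] /\
          (forall z, root p z -> 'Re z < 0)] )
  /\
  ( (exists2 w : C, (w \is Num.real) && (w != 0) &
       [/\ forall a, eigenvalue B a -> 'Re a <= 0,
           forall a, eigenvalue B a -> 'Re a = 0 -> a = w * 'i \/ a = - (w * 'i),
           mup (w * 'i) (char_poly B) = 1%N &
           mup (- (w * 'i)) (char_poly B) = 1%N])
    -> exists P, [/\ spans_ker_LB2 B P, psd P & \rank P = 2%N] ).
Proof.
move=> n_ge2 B_real.
have ker_rank2 w : (w \is Num.real) && (w != 0) -> imaginary_pair_spectrum B w ->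
    exists P, [/\ spans_ker_LB2 B P, psd P & \rank P = 2%N].
  case/andP=> w_real w0 spec.
  have [p [_ _ _ chiE] p_hurwitz] := imaginary_pair_char_poly B_real w_real w0 spec.
  case: n B n_ge2 B_real chiE {spec} => [|n] B // _ B_real chiE.
  exact: imaginary_pair_ker_LB2 B_real w_real w0 p_hurwitz chiE.
split; last by case=> w; apply: ker_rank2.
split=> [[w wP spec]|[_ _ [p [b [[_ _ _ b_gt0 chiE] p_hurwitz]]]]].
  have /andP[w_real w0] := wP.
  have [p [p_monic p_size p_real chiE] p_hurwitz] :=
    imaginary_pair_char_poly B_real w_real w0 spec.
  split.
  - exact/LB1_injective_nonsingular/(imaginary_pair_nonsingular w0 spec).
  - by have [P [P_spans _ _]] := ker_rank2 w wP spec; exists P.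
  exists p, (w ^+ 2); split=> //; split=> //.
  by rewrite -(real_normK w_real) exprn_gt0 // normr_gt0.
have w_real : sqrtC b \is Num.real by rewrite ger0_real // sqrtC_ge0 ltW.
have w0 : sqrtC b != 0 by rewrite sqrtC_eq0 lt0r_neq0.
exists (sqrtC b); first by rewrite w_real w0.
by apply: char_poly_imaginary_pair w_real w0 p_hurwitz _; rewrite sqrtCK.
Qed.
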